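(* Let $\mathcal H$ be an HDML model, $\varphi$ a formula, and $Q_n^f$ the filtration classes defined below. Then for every $n\in\mathbb N$, $Q_n^f$ is finite and $|Q_n^f|\le 2^{|\varphi|\cdot N_n}$, where $N_n=n!\cdot\sum_{k=0}^{n}\frac{2^k}{(n-k)!}$.
   Context: A cubical set consists of pairwise disjoint sets $Q_n$ ($n\in\mathbb N$), $Q=\bigcup_n Q_n$, and for $n\ge1$, $1\le i\le n$, maps $s_i,t_i:Q_n\to Q_{n-1}$ satisfying $\alpha_i\circ\beta_j=\beta_{j-1}\circ\alpha_i$ for $1\le i<j\le n$, $\alpha,\beta\in\{s,t\}$. An HDML model is $\mathcal H=(Q,\bar s,\bar t,l,V)$ with $l:Q_1\to\Sigma$ satisfying $l(s_i(q))=l(t_i(q))$ for $q\in Q_2$, $i\in\{1,2\}$, and valuation $V:Q\to 2^{AP}$. HDML formulas: $\varphi::=p\mid\bot\mid\varphi\to\varphi\mid\langle\mathsf s\rangle\varphi\mid\langle\mathsf t\rangle\varphi$. Satisfaction at $q\in Q_n$: $p$ iff $p\in V(q)$; $\bot$ never; $\to$ classical; $\langle\mathsf s\rangle\psi$ iff some $q'\in Q_{n+1}$ and $1\le i\le n+1$ have $s_i(q')=q$ and $q'\models\psi$; $\langle\mathsf t\rangle\psi$ iff some $1\le i\le n$ has $t_i(q)\models\psi$. $|\varphi|$ is the number of occurrences of $\to$, modalities, atomic propositions and $\bot$ in $\varphi$; $\mathcal C(\varphi)$ is the set of subformulas of $\varphi$. For $q,q'$ of the same dimension, $q\equiv q'$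 iff they satisfy the same formulas of $\mathcal C(\varphi)$. For $q\in Q_0$, $[q]=\{q'\in Q_0:q\equiv q'\}$; for $q\in Q_n$, $n\ge1$, $[q]=\{q'\in Q_n:q\equiv q'$, $t_i(q')\in[t_i(q)]$, $s_i(q')\in[s_i(q)]$ for all $1\le i\le n\}$; $Q_n^f=\{[q]:q\in Q_n\}$. *)

From Stdlib Require Import List.
From mathcomp Require Import all_boot.
Set Implicit Arguments. Unset Strict Implicit. Unset Printing Implicit Defensive.

Inductive formula (AP : Type) : Type :=
  | FAtom of AP
  | FBot
  | FImp of formula AP & formula AP
  | FDiaS of formula AP
  | FDiaT of formula AP.
Arguments FBot {AP}.

Fixpoint fsize AP (f : formula AP) : nat :=
  match f with
  | FAtom _ => 1
  | FBot => 1
  | FImp a b => (fsize a + fsize b).+1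
  | FDiaS a => (fsize a).+1
  | FDiaT a => (fsize a).+1
  end.

Fixpoint subformulas AP (f : formula AP) : list (formula AP) :=
  f :: match f with
       | FAtom _ | FBot => nil
       | FImp a b => subformulas a ++ subformulas b
       | FDiaS a | FDiaT a => subformulas a
       end.

(* Q n is the set Q_n of n-cells (the Q_n are disjoint since
   they are distinct types).  s n i, t n i : Q_{n+1} -> Q_n are the face
   maps s_i, t_i with the paper's 1-based index i, meaningful for
   1 <= i <= n+1 (values at other indices are irrelevant: they are never
   used by the axioms, the semantics or the filtration). *)
Record hdml_model (Sigma AP : Type) := HDML {
  Q : nat -> Type;
  sface : forall n : nat, nat -> Q n.+1 -> Q n;
  tface : forall n : nat, nat -> Q n.+1 -> Q n;
  (* cubical identities: alpha_i o beta_j = beta_{j-1} o alpha_i, i < j,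
     on Q_{n+2} (so 1 <= i < j <= n+2) *)
  cubical : forall (a b : bool) (n i j : nat) (q : Q n.+2),
      1 <= i -> i < j -> j <= n.+2 ->
      (if a then @sface else @tface) n i ((if b then @sface else @tface) n.+1 j q)
      = (if b then @sface else @tface) n j.-1 ((if a then @sface else @tface) n.+1 i q);
  label : Q 1 -> Sigma;
  label_ax : forall (q : Q 2) (i : nat), 1 <= i <= 2 ->
      label (@sface 1 i q) = label (@tface 1 i q);
  val : forall n : nat, Q n -> AP -> Prop
}.
Arguments Q {Sigma AP}.
Arguments sface {Sigma AP} h {n}.
Arguments tface {Sigma AP} h {n}.
Arguments val {Sigma AP} h {n}.

Fixpoint sat Sigma AP (H : hdml_model Sigma AP) (f : formula AP)
  : forall n : nat, Q H n -> Prop :=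
  match f with
  | FAtom p => fun n q => val H q p
  | FBot => fun _ _ => False
  | FImp a b => fun n q => @sat Sigma AP H a n q -> @sat Sigma AP H b n q
  | FDiaS a => fun n q =>
      exists (q' : Q H n.+1) (i : nat),
        1 <= i <= n.+1 /\ sface H i q' = q /\ @sat Sigma AP H a n.+1 q'
  | FDiaT a => fun n =>
      match n return Q H n -> Prop with
      | 0 => fun _ => False
      | m.+1 => fun q => exists i : nat, 1 <= i <= m.+1 /\ @sat Sigma AP H a m (tface H i q)
      end
  end.
Arguments sat {Sigma AP} H f {n}.

Definition fequiv Sigma AP (H : hdml_model Sigma AP) (phi : formula AP)
  (n : nat) (q q' : Q H n) : Prop :=
  forall psi, In psi (subformulas phi) -> (sat H psi q <-> sat H psi q').
Arguments fequiv {Sigma AP} H phi {n}.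

Fixpoint fclass Sigma AP (H : hdml_model Sigma AP) (phi : formula AP)
  (n : nat) : Q H n -> Q H n -> Prop :=
  match n return Q H n -> Q H n -> Prop with
  | 0 => fun q q' => fequiv H phi q q'
  | m.+1 => fun q q' => fequiv H phi q q' /\
      forall i, 1 <= i <= m.+1 ->
        @fclass Sigma AP H phi m (tface H i q) (tface H i q') /\
        @fclass Sigma AP H phi m (sface H i q) (sface H i q')
  end.
Arguments fclass {Sigma AP} H phi n.

Definition Qf {Sigma AP} (H : hdml_model Sigma AP) (phi : formula AP) (n : nat)
  (S : Q H n -> Prop) : Prop :=
  exists q : Q H n, S = fclass H phi n q.
Arguments Qf {Sigma AP} H phi n.

Definition finite_card_le (A : Type) (P : A -> Prop) (k : nat) : Prop :=
  exists L : list A, length L <= k /\ forall a, P a -> In a L.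

(* N_n = n! * sum_{k=0}^n 2^k/(n-k)!  =  sum_k 2^k * (n!/(n-k)!)  (exact division) *)
Definition Nbound (n : nat) : nat :=
  \sum_(k < n.+1) 2 ^ k * (n`! %/ (n - k)`!).

(* Two cells lie in the same filtration class as soon as they satisfy the same
   subformulas of phi and their i-th faces lie in the same classes for every i.
   So a class of Q_{n+1} is determined by a truth vector over C(phi) (at most
   2^|phi| choices) together with the classes of its 2(n+1) faces, giving
   |Q_{n+1}^f| <= 2^|phi| * |Q_n^f|^(2(n+1)); the exponent of the resulting bound
   obeys N_{n+1} = 2(n+1) N_n + 1, which is the recursion solved by N_n. *)

From Stdlib Require Import List.
From mathcomp Require Import all_boot.
From Stdlib Require Import ClassicalEpsilon FunctionalExtensionality PropExtensionality.
Set Implicit Arguments. Unset Strict Implicit.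

Lemma Nbound_ffact n : Nbound n = \sum_(k < n.+1) 2 ^ k * n ^_ k.
Proof. by apply: eq_bigr => k _; rewrite ffact_factd // -ltnS. Qed.

Lemma Nbound0 : Nbound 0 = 1.
Proof. by rewrite /Nbound big_ord_recl big_ord0. Qed.

Lemma NboundS n : Nbound n.+1 = (2 * n.+1 * Nbound n).+1.
Proof.
rewrite !Nbound_ffact big_ord_recl ffactn0 muln1 add1n big_distrr /=; congr S.
by apply: eq_bigr => k _; rewrite /bump add1n ffactSS expnS -!mulnA; congr (2 * _); rewrite mulnCA.
Qed.

Lemma expn_Nbound_step F n :
  2 ^ F * ((2 ^ (F * Nbound n)) ^ 2) ^ n.+1 = 2 ^ (F * Nbound n.+1).
Proof.
rewrite -!expnM -expnD NboundS [in RHS]mulnS; congr (2 ^ (F + _)).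
by rewrite (mulnC (2 * n.+1)) !mulnA.
Qed.

Section Covers.

Variables (A : Type) (R : A -> A -> Prop).

Definition covers (L : list A) : Prop := forall x, exists2 y, In y L & R x y.

Lemma covers_of_classifier (K : finType) (f : A -> K) :
  (forall x y, f x = f y -> R x y) ->
  exists2 L : list A, length L <= #|K| & covers L.
Proof.
move=> fR.
suff [L sizeL coverL] : exists2 L : list A, length L <= size (enum K) &
    forall x, f x \in enum K -> exists2 y, In y L & f x = f y.
  exists L; first by rewrite cardE.
  by move=> x; have [|y Ly /fR] := coverL x; rewrite ?mem_enum //; exists y.
elim: (enum K) => [|k s [L sizeL coverL]]; first by exists nil.
have [[y fy]|noy] := classic (exists y, f y = k).
- exists (y :: L) => // x; rewrite in_cons => /orP [/eqP ->|/coverL [z Lz fxz]].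
  + by exists y; [left|].
  + by exists z; [right|].
- exists L => [|x]; first exact: leqW.
  rewrite in_cons => /orP [/eqP fx|]; last exact: coverL.
  by case: noy; exists x.
Qed.

Hypotheses (R_sym : forall x y, R x y -> R y x)
           (R_trans : forall x y z, R x y -> R y z -> R x z).

Lemma classifier_of_covers (L : list A) :
  covers L -> exists idx : A -> 'I_(length L), forall x y, idx x = idx y -> R x y.
Proof.
move=> coverL.
have idx_ex x : exists i : 'I_(length L), R x (List.nth i L x).
  have [y /(In_nth _ _ x) [i [/ltP iL <-]] Rxy] := coverL x.
  by exists (Ordinal iL).
exists (fun x => proj1_sig (constructive_indefinite_description _ (idx_ex x))).
move=> x y; case: constructive_indefinite_description => i Rxi.
case: constructive_indefinite_description => j Ryj /= eq_ij; subst j.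
apply: R_trans Rxi (R_sym _); rewrite (nth_indep _ _ y) //; exact/ltP.
Qed.

End Covers.

Lemma length_subformulas AP (phi : formula AP) : length (subformulas phi) = fsize phi.
Proof. by elim: phi => //= [a IHa b IHb|a IHa|a IHa]; rewrite ?length_app ?IHa ?IHb. Qed.

Section Filtration.

Variables (Sigma AP : Type) (H : hdml_model Sigma AP) (phi : formula AP).

Lemma fclass_sym n (q q' : Q H n) : fclass H phi n q q' -> fclass H phi n q' q.
Proof.
elim: n q q' => [|n IH] q q' /=.
- by move=> eqv psi psi_phi; split => /(eqv psi psi_phi).
- move=> [eqv faces]; split; first by move=> psi psi_phi; split => /(eqv psi psi_phi).
  by move=> i i_n; have [? ?] := faces i i_n; split; apply: IH.
Qed.

Lemma fclass_trans n (q q' q'' : Q H n) :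
  fclass H phi n q q' -> fclass H phi n q' q'' -> fclass H phi n q q''.
Proof.
have eqv_trans m (x y z : Q H m) :
    fequiv H phi x y -> fequiv H phi y z -> fequiv H phi x z.
  by move=> xy yz psi psi_phi; exact: iff_trans (xy _ psi_phi) (yz _ psi_phi).
elim: n q q' q'' => [|n IH] q q' q'' /=; first exact: eqv_trans.
move=> [eqv faces] [eqv' faces']; split; first exact: eqv_trans eqv eqv'.
move=> i i_n; have [? ?] := faces i i_n; have [? ?] := faces' i i_n.
by split; apply: IH; eassumption.
Qed.

Lemma fclass_eq n (q q' : Q H n) :
  fclass H phi n q q' -> fclass H phi n q = fclass H phi n q'.
Proof.
move=> qq'; apply: functional_extensionality => x.
apply: propositional_extensionality; split => [|q'x]; last exact: fclass_trans q'x.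
exact: fclass_trans (fclass_sym qq').
Qed.

Definition truth_vector n (q : Q H n) : {ffun 'I_(fsize phi) -> bool} :=
  [ffun j : 'I_(fsize phi) =>
     if excluded_middle_informative (sat H (List.nth j (subformulas phi) FBot) q)
     then true else false].

Lemma truth_vector_fequiv n (q q' : Q H n) :
  truth_vector q = truth_vector q' -> fequiv H phi q q'.
Proof.
move=> eq_tv psi /(In_nth _ _ FBot) [j [/ltP j_phi <-]].
rewrite length_subformulas in j_phi.
move/ffunP/(_ (Ordinal j_phi)): eq_tv; rewrite !ffunE /=.
by do 2 case: excluded_middle_informative.
Qed.

Lemma covers_fclass0 :
  exists2 L : list (Q H 0), length L <= 2 ^ fsize phi & covers (fclass H phi 0) L.
Proof.
have [L sizeL coverL] := covers_of_classifier (@truth_vector_fequiv 0).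
by exists L; rewrite // -[fsize phi]card_ord -card_bool -card_ffun.
Qed.

Lemma covers_fclassS n (L : list (Q H n)) :
  covers (fclass H phi n) L ->
  exists2 L' : list (Q H n.+1),
    length L' <= 2 ^ fsize phi * (length L ^ 2) ^ n.+1 & covers (fclass H phi n.+1) L'.
Proof.
move=> coverL.
have [idx idx_fclass] := classifier_of_covers (@fclass_sym n) (@fclass_trans n) coverL.
pose signature (q : Q H n.+1) :=
  (truth_vector q, [ffun i : 'I_n.+1 => (idx (tface H i.+1 q), idx (sface H i.+1 q))]).
have signature_fclass q q' : signature q = signature q' -> fclass H phi n.+1 q q'.
  case=> /truth_vector_fequiv eqv /ffunP faces; split=> // i /andP [i_gt0 i_le].
  have i_lt : i.-1 < n.+1 by rewrite prednK.
  move: (faces (Ordinal i_lt)); rewrite !ffunE /= prednK //.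
  by case=> /idx_fclass ? /idx_fclass.
have [L' sizeL' coverL'] := covers_of_classifier signature_fclass.
exists L' => //; move: sizeL'.
by rewrite card_prod !card_ffun card_prod !card_ord card_bool mulnn.
Qed.

Lemma covers_fclass n :
  exists2 L : list (Q H n),
    length L <= 2 ^ (fsize phi * Nbound n) & covers (fclass H phi n) L.
Proof.
elim: n => [|n [L sizeL /covers_fclassS [L' sizeL' coverL']]].
  by rewrite Nbound0 muln1; exact: covers_fclass0.
exists L' => //; rewrite -expn_Nbound_step (leq_trans sizeL') //.
by rewrite leq_mul // leq_exp2r // leq_exp2r.
Qed.

End Filtration.

Theorem mainTheorem4 (Sigma AP : Type) (H : hdml_model Sigma AP)
  (phi : formula AP) (n : nat) :
  finite_card_le (Qf H phi n) (2 ^ (fsize phi * Nbound n)).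
Proof.
have [L sizeL coverL] := covers_fclass H phi n.
exists (List.map (fclass H phi n) L); split; first by rewrite length_map.
move=> _ [q ->]; have [q' Lq' qq'] := coverL q.
by rewrite (fclass_eq qq'); apply: in_map.
Qed.
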